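(* Let $\Gamma$ be a discrete group, $V$ a left $\Gamma$-set and $\mathcal G=\Gamma\ltimes V$ the transformation groupoid. Let $E$ be a left $\Gamma$-set with a $1$-cocycle $\varphi\colon\Gamma\times E\to\Gamma$, $(h,e)\mapsto h|_e$ (i.e. $(gh)|_e=g|_{h\cdot e}\cdot h|_e$ for all $g,h\in\Gamma$, $e\in E$), and maps $r,s\colon E\to V$ with $s(g\cdot e)=(g|_e)\cdot s(e)$ and $r(g\cdot e)=g\cdot r(e)$ for all $g\in\Gamma$, $e\in E$. Then $X=E\times\Gamma$ with the discrete topology, anchors $r(e,g)=r(e)$, $s(e,g)=g^{-1}\cdot s(e)$, right $\Gamma$-action $(e,g)\cdot g_2=(e,gg_2)$ and left $\Gamma$-action $h\cdot(e,g)=(h\cdot e,h|_e\cdot g)$ is a groupoid correspondence $\mathcal G\leftarrow\mathcal G$. Every groupoid correspondence $\mathcal G\leftarrow\mathcal G$ is isomorphic to one of this form, where $(E,r,s)$ is unique up to isomorphism and $\varphi$ is unique up to the action of the group of maps $\psi\colon E\to\Gamma$ given by $\varphi^\psi(h,e)=\psi(h\cdot e)^{-1}\varphi(h,e)\psi(e)$. The correspondence $X$ is proper if and only if $r\colon E\to V$ is finite-to-one, and tight if and only if $r\colon E\to V$ is bijective.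
   Context: $V$ carries the discrete topology; $\Gamma\ltimes V$ has arrows $(g,v)$ with $s(g,v)=v$, $r(g,v)=gv$. An action of $\Gamma\ltimes V$ on a space is the same as a $\Gamma$-action together with a $\Gamma$-equivariant anchor map to $V$ (for right actions: $s(x\gamma)=\gamma^{-1}s(x)$). A groupoid correspondence $X\colon\mathcal H\leftarrow\mathcal G$ between étale groupoids is a space with commuting continuous left $\mathcal H$-action (anchor $r$) and right $\mathcal G$-action (anchor $s$), such that $s$ is a local homeomorphism and the right action is free and proper (the map $(x,g)\mapsto(xg,x)$ is injective and proper). Isomorphism of correspondences means a biequivariant homeomorphism. $X$ is proper if $r_*\colon X/\mathcal G\to\mathcal H^0$ is proper, and tight if $r_*$ is a homeomorphism. *)

From HB Require Import structures.
From mathcomp Require Import all_boot all_order all_algebra generic_quotient.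
From mathcomp Require Import all_classical all_reals topology.

Set Implicit Arguments.
Unset Strict Implicit.
Unset Printing Implicit Defensive.

Local Open Scope classical_set_scope.

Record DGroup := {
  gcar :> Type;
  gmul : gcar -> gcar -> gcar;
  gone : gcar;
  ginv : gcar -> gcar;
  gmulA : forall x y z, gmul x (gmul y z) = gmul (gmul x y) z;
  gmul1 : forall x, gmul gone x = x;
  gmulV : forall x, gmul (ginv x) x = gone }.

Arguments gmul {d}.
Arguments gone {d}.
Arguments ginv {d}.

Notation disc T := (discrete_topology {classic T}).

Section Correspondences.
Variable G : DGroup.

Local Notation "x * y" := (gmul x y).
Local Notation "x ^-1" := (ginv x).

Definition is_left_action (T : Type) (act : G -> T -> T) : Prop :=
  (forall x, act gone x = x) /\
  (forall g h x, act (g * h) x = act g (act h x)).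

Definition is_right_action (T : Type) (act : T -> G -> T) : Prop :=
  (forall x, act x gone = x) /\
  (forall x g h, act x (g * h) = act (act x g) h).

Definition is_cocycle (E : Type) (actE : G -> E -> E) (phi : G -> E -> G) :=
  forall g h e, phi (g * h) e = phi g (actE h e) * phi h e.

Definition local_homeo (X Y : topologicalType) (f : X -> Y) : Prop :=
  forall x, exists U : set X,
    [/\ open U, U x, open (f @` U),
        (forall a b, U a -> U b -> f a = f b -> a = b) &
        {within U, continuous f} /\
        (forall W, open W -> W `<=` U -> open (f @` W))].

Definition proper_map (X Y : topologicalType) (f : X -> Y) : Prop :=
  forall K : set Y, compact K -> compact (f @^-1` K).

Definition homeomorphism (X Y : topologicalType) (f : X -> Y) : Prop :=
  continuous f /\ exists g : Y -> X, [/\ cancel f g, cancel g f & continuous g].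

Variables (V : Type) (actV : G -> V -> V).

(* X is a groupoid correspondence (G ⋉ V) <- (G ⋉ V), where an action of
   G ⋉ V is a G-action with a G-equivariant anchor map to the discrete V. *)
Definition is_correspondence (X : topologicalType)
    (lact : G -> X -> X) (ract : X -> G -> X) (r s : X -> disc V) : Prop :=
  [/\
      is_left_action lact /\ (forall h x, r (lact h x) = actV h (r x)),
      is_right_action ract /\ (forall x g, s (ract x g) = actV g^-1 (s x)),
      [/\ forall h x g, lact h (ract x g) = ract (lact h x) g,
          forall x g, r (ract x g) = r x &
          forall h x, s (lact h x) = s x],
      [/\ continuous r, continuous s,
          forall h, continuous (lact h) &
          forall g, continuous (fun x => ract x g)] &
      local_homeo s /\
      (* the right action is free and proper *)
      injective (fun p : (X * disc G)%type => (ract p.1 p.2, p.1)) /\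
      proper_map (fun p : (X * disc G)%type => (ract p.1 p.2, p.1))].

Definition corr_iso (X Y : topologicalType)
    (lX : G -> X -> X) (rX : X -> G -> X) (rrX sX : X -> disc V)
    (lY : G -> Y -> Y) (rY : Y -> G -> Y) (rrY sY : Y -> disc V) : Prop :=
  exists F : X -> Y,
    [/\ homeomorphism F,
        forall h x, F (lX h x) = lY h (F x),
        forall x g, F (rX x g) = rY (F x) g,
        forall x, rrY (F x) = rrX x &
        forall x, sY (F x) = sX x].

Section OrbitSpace.
Variables (X : topologicalType) (ract : X -> G -> X).

Definition orbit_rel : rel X :=
  fun x y => `[< range (ract x) = range (ract y) >].

Lemma orbit_rel_refl : reflexive orbit_rel.
Proof. by move=> x; apply/asboolP. Qed.

Lemma orbit_rel_sym : symmetric orbit_rel.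
Proof.
by move=> x y; apply/asboolP/asboolP => ->.
Qed.

Lemma orbit_rel_trans : transitive orbit_rel.
Proof. by move=> y x z /asboolP Hxy /asboolP Hyz; apply/asboolP; rewrite Hxy. Qed.

Definition orbit_equiv : equiv_rel X :=
  EquivRel orbit_rel orbit_rel_refl orbit_rel_sym orbit_rel_trans.

Definition orbit_space := quotient_topology {eq_quot orbit_equiv}%qT.

Definition anchor_star (r : X -> disc V) : orbit_space -> disc V :=
  fun q => r (repr q).

End OrbitSpace.
Arguments anchor_star {X} ract r.

Definition proper_corr (X : topologicalType) (ract : X -> G -> X)
    (r : X -> disc V) : Prop :=
  proper_map (anchor_star ract r).

Definition tight_corr (X : topologicalType) (ract : X -> G -> X)
    (r : X -> disc V) : Prop :=
  homeomorphism (anchor_star ract r).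

Definition corr_data (E : Type) (actE : G -> E -> E) (phi : G -> E -> G)
    (rE sE : E -> V) : Prop :=
  [/\ is_left_action actE, is_cocycle actE phi,
      forall g e, sE (actE g e) = actV (phi g e) (sE e) &
      forall g e, rE (actE g e) = actV g (rE e)].

Definition Xspace (E : Type) : topologicalType := disc (E * G)%type.

Definition X_lact (E : Type) (actE : G -> E -> E) (phi : G -> E -> G)
  : G -> Xspace E -> Xspace E :=
  fun h p => (actE h p.1, phi h p.1 * p.2).

Definition X_ract (E : Type) : Xspace E -> G -> Xspace E :=
  fun p g2 => (p.1, p.2 * g2).

Definition X_r (E : Type) (rE : E -> V) : Xspace E -> disc V :=
  fun p => rE p.1.

Definition X_s (E : Type) (sE : E -> V) : Xspace E -> disc V :=
  fun p => actV (p.2)^-1 (sE p.1).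

End Correspondences.

From HB Require Import structures.
From mathcomp Require Import all_boot all_order all_algebra generic_quotient.
From mathcomp Require Import all_classical all_reals topology.

(** A point of a correspondence [X] is [repr q . g] for its orbit [q] and,
    by freeness of the right action, a unique [g]; so [x |-> (pi x, g)]
    identifies [X] with [E * G] for the orbit space [E = X / G], and the left
    action transported along it has the form [(e, g) |-> (h e, h|_e g)] for a
    cocycle [h|_e].  Since [s] is a local homeomorphism into the discrete [V],
    [X] is discrete, so this identification is a homeomorphism.  Changing the
    representatives to [repr q . psi q] turns the cocycle into [phi^psi],
    which gives uniqueness.  For [X = E * G] the orbit of [(e, g)] is
    [{e} * G], so [r_*] is [r]; on discrete spaces compact sets are the finite
    ones and homeomorphisms are the bijections, whence the criteria for
    properness and tightness. *)

Set Implicit Arguments.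
Unset Strict Implicit.
Unset Printing Implicit Defensive.

Local Open Scope classical_set_scope.

Definition is_discrete (X : topologicalType) : Prop := forall A : set X, open A.

Lemma disc_discrete (T : Type) : is_discrete (disc T).
Proof. exact: discrete_open. Qed.

Lemma discrete_of_open_set1 (X : topologicalType) :
  (forall x : X, open [set x]) -> is_discrete X.
Proof.
move=> open1 A; rewrite -[A]image_id -bigcup_imset1.
by apply: bigcup_open => x _; exact: open1.
Qed.

Lemma discrete_prod (X Y : topologicalType) :
  is_discrete X -> is_discrete Y -> is_discrete (X * Y)%type.
Proof.
move=> dX dY; apply: discrete_of_open_set1 => -[x y].
have -> : [set (x, y)] = fst @^-1` [set x] `&` snd @^-1` [set y].
  by apply/seteqP; split => [_ -> //|[a b] /= [-> ->]].
apply: openI; apply: open_comp.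
- by move=> p _; exact: cvg_fst.
- exact: dX.
- by move=> p _; exact: cvg_snd.
- exact: dY.
Qed.

Lemma discrete_compact_finite (X : topologicalType) (A : set X) :
  is_discrete X -> compact A -> finite_set A.
Proof.
move=> dX /compact_near_coveringP coverA.
(* Along the filter of supersets of finite sets, each point of [A] is
   eventually covered (singletons are neighbourhoods), hence by compactness
   [A] is eventually covered, i.e. contained in a finite set. *)
pose F := filter_from [set B : set X | finite_set B]
                      (fun B => [set i | B `<=` i]).
have F_filter : Filter F.
  apply: filter_from_filter; first by exists set0; exact: finite_set0.
  move=> B C fB fC; exists (B `|` C); first by rewrite /= finite_setU.
  by move=> i /= BCi; split=> x Bx; apply: BCi; [left|right].
have [B fB BA] : F [set i | A `<=` i].
  apply: (coverA _ F (fun i x => i x)) => x Ax.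
  exists ([set x], [set i | i x]) => [|[_ i] /= [-> //]]; split => /=.
    by apply: open_nbhs_nbhs; split; [exact: dX|].
  by exists [set x]; [exact: finite_set1|move=> i /= /(_ x erefl)].
exact: sub_finite_set (BA _ (@subset_refl _ B)) fB.
Qed.

Lemma discrete_continuous (X Y : topologicalType) (f : X -> Y) :
  is_discrete X -> continuous f.
Proof. by move=> dX; apply/continuousP => A _; exact: dX. Qed.

Lemma discrete_proper_mapP (X Y : topologicalType) (f : X -> Y) :
  is_discrete X -> is_discrete Y ->
  proper_map f <-> forall K, finite_set K -> finite_set (f @^-1` K).
Proof.
move=> dX dY; split=> fP K.
  by move=> /finite_compact/fP; exact: discrete_compact_finite.
by move=> /(discrete_compact_finite dY)/fP; exact: finite_compact.
Qed.

Lemma discrete_injective_proper_map (X Y : topologicalType) (f : X -> Y) :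
  is_discrete X -> is_discrete Y -> injective f -> proper_map f.
Proof.
move=> dX dY fI; apply/discrete_proper_mapP => // K; apply: finite_preimage.
by move=> ? ? _ _; exact: fI.
Qed.

Lemma discrete_homeomorphismP (X Y : topologicalType) (f : X -> Y) :
  is_discrete X -> is_discrete Y ->
  homeomorphism f <-> bijective f.
Proof.
move=> dX dY; split=> [[_ [g [fK gK _]]]|[g fK gK]]; first by exists g.
by split; [|exists g; split] => //; exact: discrete_continuous.
Qed.

Lemma discrete_local_homeo (X Y : topologicalType) (f : X -> Y) :
  is_discrete X -> is_discrete Y -> local_homeo f.
Proof.
move=> dX dY x; exists [set x]; split; [exact: dX|by []|exact: dY| |].
  by move=> a b -> ->.
by split=> [|W _ _]; [apply: continuous_subspaceT; exact: discrete_continuous|].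
Qed.

Section DGroupTheory.
Variable G : DGroup.
Local Notation "x * y" := (gmul x y).
Local Notation "x ^-1" := (ginv x).
Local Notation "1" := (@gone G).
Implicit Types x y : G.

Lemma gmul_idem_eq1 x : x * x = x -> x = 1.
Proof. by move=> /(congr1 (gmul x^-1)); rewrite gmulA gmulV gmul1. Qed.

Lemma gmulgV x : x * x^-1 = 1.
Proof.
by apply: gmul_idem_eq1; rewrite -gmulA [x^-1 * (x * _)]gmulA gmulV gmul1.
Qed.

Lemma gmulg1 x : x * 1 = x.
Proof. by rewrite -(gmulV x) gmulA gmulgV gmul1. Qed.

Lemma gmulKg x y : x^-1 * (x * y) = y.
Proof. by rewrite gmulA gmulV gmul1. Qed.

Lemma gmulKVg x y : x * (x^-1 * y) = y.
Proof. by rewrite gmulA gmulgV gmul1. Qed.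

Lemma gmulgI x y z : x * y = x * z -> y = z.
Proof. by move=> e; rewrite -(gmulKg x y) e gmulKg. Qed.

Lemma ginvK : involutive (@ginv G).
Proof. by move=> x; apply: (@gmulgI x^-1); rewrite gmulgV gmulV. Qed.

Lemma ginvM x y : (x * y)^-1 = y^-1 * x^-1.
Proof. by apply: (@gmulgI (x * y)); rewrite gmulgV -gmulA gmulKVg gmulgV. Qed.

Lemma ginv1 : 1^-1 = 1.
Proof. by rewrite -[LHS]gmul1 gmulgV. Qed.

Section LeftActions.
Variables (T : Type) (act : G -> T -> T).
Hypothesis actP : is_left_action act.

Lemma act1 t : act 1 t = t.
Proof. by case: actP. Qed.

Lemma actM g h t : act (g * h) t = act g (act h t).
Proof. by case: actP. Qed.

Lemma actK g t : act g^-1 (act g t) = t.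
Proof. by rewrite -actM gmulV act1. Qed.

Lemma actKV g t : act g (act g^-1 t) = t.
Proof. by rewrite -actM gmulgV act1. Qed.

End LeftActions.

Lemma cocycle1 (E : Type) (actE : G -> E -> E) (phi : G -> E -> G) :
  is_left_action actE -> is_cocycle actE phi -> forall e, phi 1 e = 1.
Proof.
move=> actP phiP e; apply: gmul_idem_eq1.
by rewrite -{1}(act1 actP e) -phiP gmul1.
Qed.

End DGroupTheory.

Section StandardCorrespondence.
Variables (G : DGroup) (E : Type).
Local Notation X := (Xspace G E).
Local Notation ract := (@X_ract G E).

Lemma Xspace_discrete : is_discrete X.
Proof. exact: disc_discrete. Qed.

Lemma X_ract_action : is_right_action ract.
Proof. by split=> [[e g]|[e g] h k]; rewrite /X_ract /= ?gmulg1 ?gmulA. Qed.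

Lemma X_ract_free :
  injective (fun p : (X * disc G)%type => (ract p.1 p.2, p.1)).
Proof.
move=> [[e g] h] [[e' g'] h'] /= [-> gh _ gg']; rewrite gg' in gh *.
by rewrite (gmulgI gh).
Qed.

Lemma X_ract_proper :
  proper_map (fun p : (X * disc G)%type => (ract p.1 p.2, p.1)).
Proof.
apply: discrete_injective_proper_map X_ract_free;
  by apply: discrete_prod; exact: disc_discrete.
Qed.

Variables (V : Type) (actV : G -> V -> V).
Variables (actE : G -> E -> E) (phi : G -> E -> G) (rE sE : E -> V).
Hypothesis actVP : is_left_action actV.
Hypothesis dataP : corr_data actV actE phi rE sE.
Local Notation lact := (X_lact actE phi).

Lemma X_lact_action : is_left_action lact.
Proof.
case: dataP => actEP phiP _ _; split=> [[e g]|h k [e g]]; rewrite /X_lact /=.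
  by rewrite (act1 actEP) (cocycle1 actEP phiP) gmul1.
by rewrite (actM actEP) phiP gmulA.
Qed.

Lemma X_is_correspondence :
  is_correspondence actV lact ract (X_r rE) (X_s actV sE).
Proof.
case: dataP => actEP phiP sEP rEP; split.
- by split; [exact: X_lact_action | move=> h [e g]; exact: rEP].
- split; first exact: X_ract_action.
  by move=> [e g] h; rewrite /X_s /= ginvM (actM actVP).
- split=> [h [e g] k|//|h [e g]]; rewrite /X_lact /X_ract /X_s /=.
    by rewrite gmulA.
  by rewrite ginvM (actM actVP) sEP (actK actVP).
- by split=> *; apply: discrete_continuous; exact: Xspace_discrete.
- split; last by split; [exact: X_ract_free | exact: X_ract_proper].
  by apply: discrete_local_homeo; exact: disc_discrete.
Qed.

End StandardCorrespondence.

Section StandardOrbitSpace.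
Local Open Scope quotient_scope.
Variables (G : DGroup) (E : Type).
Local Notation "x * y" := (gmul x y).
Local Notation "x ^-1" := (ginv x).
Local Notation ract := (@X_ract G E).
Local Notation Q := (orbit_space ract).

Lemma X_orbit_relE (x y : Xspace G E) : orbit_rel ract x y <-> x.1 = y.1.
Proof.
split=> [/asboolP same_orbit|].
  have : range (ract x) x.
    by exists gone => //; case: x {same_orbit} => e g; rewrite /X_ract gmulg1.
  by rewrite same_orbit => -[g _ <-].
case: x y => [e g] [_ g'] /= <-; apply/asboolP/seteqP; split=> _ [k _ <-].
  by exists (g'^-1 * (g * k)) => //; rewrite /X_ract /= gmulKVg.
by exists (g^-1 * (g' * k)) => //; rewrite /X_ract /= gmulKVg.
Qed.

Lemma X_piE (x y : Xspace G E) : \pi_Q x = \pi_Q y <-> x.1 = y.1.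
Proof. by rewrite -X_orbit_relE; split=> [/eqmodP|?]; last apply/eqmodP. Qed.

Definition X_orbit (e : E) : Q := \pi_Q ((e, gone) : Xspace G E).

Definition X_orbit_label (q : Q) : E := (repr q).1.

Lemma X_orbitK : cancel X_orbit X_orbit_label.
Proof. by move=> e; have /X_piE := reprK (X_orbit e). Qed.

Lemma X_orbit_labelK : cancel X_orbit_label X_orbit.
Proof. by move=> q; rewrite -[RHS]reprK; apply/X_piE. Qed.

Lemma X_orbit_space_discrete : is_discrete Q.
Proof. by move=> A; exact: Xspace_discrete. Qed.

Variables (V : Type) (rE : E -> V).

Lemma X_anchor_starE : @anchor_star G V _ ract (X_r rE) = rE \o X_orbit_label.
Proof. by []. Qed.

Lemma X_proper_corrP :
  proper_corr ract (X_r rE) <-> forall v, finite_set (rE @^-1` [set v]).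
Proof.
rewrite /proper_corr X_anchor_starE discrete_proper_mapP; first last.
- exact: disc_discrete.
- exact: X_orbit_space_discrete.
split=> [fibP v|fibP K fK].
  have -> : rE @^-1` [set v] =
            X_orbit @^-1` ((rE \o X_orbit_label) @^-1` [set v]).
    by apply/seteqP; split=> e /=; rewrite X_orbitK.
  apply: finite_preimage (fibP _ (finite_set1 v)).
  by move=> ? ? _ _; exact: (can_inj X_orbitK).
apply: (@finite_preimage _ _ (rE @^-1` K)).
  by move=> ? ? _ _; exact: (can_inj X_orbit_labelK).
by apply: sub_finite_set (bigcup_finite fK (fun v _ => fibP v)) => e Ke;
  exists (rE e).
Qed.

Lemma X_tight_corrP : tight_corr ract (X_r rE) <-> bijective rE.
Proof.
rewrite /tight_corr X_anchor_starE discrete_homeomorphismP; first last.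
- exact: disc_discrete.
- exact: X_orbit_space_discrete.
split=> [r_bij|rE_bij]; last exact: bij_comp (Bijective X_orbit_labelK X_orbitK).
apply: (eq_bij (bij_comp r_bij (Bijective X_orbitK X_orbit_labelK))) => e.
by rewrite /= X_orbitK.
Qed.

End StandardOrbitSpace.

Section Uniqueness.
Variables (G : DGroup) (V : Type) (actV : G -> V -> V).
Local Notation "x * y" := (gmul x y).
Local Notation "x ^-1" := (ginv x).
Local Notation "1" := (@gone G).
Variables (E : Type) (actE : G -> E -> E) (phi : G -> E -> G) (rE sE : E -> V).
Variables (E' : Type) (actE' : G -> E' -> E') (phi' : G -> E' -> G).
Variables (rE' sE' : E' -> V).

Definition corr_data_iso : Prop :=
  exists (f : E -> E') (psi : E -> G),
    [/\ bijective f,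
        forall h e, f (actE h e) = actE' h (f e),
        forall e, rE' (f e) = rE e,
        forall h e, phi' h (f e) = (psi (actE h e))^-1 * (phi h e * psi e) &
        forall e, sE' (f e) = actV (psi e)^-1 (sE e)].

Lemma X_ract_morphE (F : Xspace G E -> Xspace G E') :
  (forall x g, F (X_ract x g) = X_ract (F x) g) ->
  forall e g, F (e, g) = ((F (e, 1)).1, (F (e, 1)).2 * g).
Proof.
move=> F_ract e g; have := F_ract (e, 1) g; rewrite /X_ract /= gmul1 => ->.
by case: (F _).
Qed.

Hypothesis actVP : is_left_action actV.

Lemma corr_iso_data_iso :
  corr_iso (X_lact actE phi) (@X_ract G E) (X_r rE) (X_s actV sE)
           (X_lact actE' phi') (@X_ract G E') (X_r rE') (X_s actV sE') ->
  corr_data_iso.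
Proof.
move=> [F [[_ [F' [FK F'K _]]] F_lact F_ract F_r F_s]].
pose f e := (F (e, 1)).1; pose p e := (F (e, 1)).2.
have FE e g : F (e, g) = (f e, p e * g) by exact: X_ract_morphE.
exists f, (fun e => (p e)^-1); split.
- exists (fun e' => (F' (e', 1)).1) => [e|e'].
    have -> : (f e, 1) = F (e, (p e)^-1) by rewrite FE gmulgV.
    by rewrite FK.
  by have := F'K (e', 1); case: (F' _) => a b; rewrite FE => -[].
- by move=> h e; have := F_lact h (e, 1); rewrite /X_lact /= !FE => -[].
- by move=> e; exact: F_r (e, 1).
- move=> h e; have := F_lact h (e, 1); rewrite /X_lact /= !FE !gmulg1.
  by move=> -[_ p_phi]; rewrite ginvK gmulA p_phi -gmulA gmulgV gmulg1.
- move=> e; have := F_s (e, 1); rewrite /X_s /= FE gmulg1 ginv1 (act1 actVP).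
  by rewrite ginvK => <-; rewrite (actKV actVP).
Qed.

Lemma data_iso_corr_iso :
  corr_data_iso ->
  corr_iso (X_lact actE phi) (@X_ract G E) (X_r rE) (X_s actV sE)
           (X_lact actE' phi') (@X_ract G E') (X_r rE') (X_s actV sE').
Proof.
move=> [f [psi [[f' fK f'K] f_act f_r f_phi f_s]]].
exists (fun x => (f x.1, (psi x.1)^-1 * x.2)); split.
- apply/discrete_homeomorphismP; try exact: Xspace_discrete.
  exists (fun y => (f' y.1, psi (f' y.1) * y.2)) => [[e g]|[e' g]] /=.
    by rewrite fK gmulKVg.
  by rewrite f'K gmulKg.
- by move=> h [e g]; rewrite /X_lact /= f_act f_phi -!gmulA gmulKVg.
- by move=> [e g] k; rewrite /X_ract /= gmulA.
- by move=> [e g]; exact: f_r.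
- move=> [e g]; rewrite /X_s /= f_s ginvM ginvK (actM actVP).
  by rewrite (actKV actVP).
Qed.

Lemma X_corr_isoP :
  corr_iso (X_lact actE phi) (@X_ract G E) (X_r rE) (X_s actV sE)
           (X_lact actE' phi') (@X_ract G E') (X_r rE') (X_s actV sE') <->
  corr_data_iso.
Proof. by split; [exact: corr_iso_data_iso | exact: data_iso_corr_iso]. Qed.

End Uniqueness.

Section Classification.
Local Open Scope quotient_scope.
Variables (G : DGroup) (V : Type) (actV : G -> V -> V).
Local Notation "x * y" := (gmul x y).
Local Notation "x ^-1" := (ginv x).
Local Notation "1" := (@gone G).
Hypothesis actVP : is_left_action actV.
Variables (X : topologicalType) (lact : G -> X -> X) (ract : X -> G -> X).
Variables (r s : X -> disc V).
Hypothesis corrP : is_correspondence actV lact ract r s.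
Local Notation E := (orbit_space ract).
Local Notation pi := (\pi_E).

Lemma lact_action : is_left_action lact.
Proof. by case: corrP => [[]]. Qed.

Lemma r_lact h x : r (lact h x) = actV h (r x).
Proof. by case: corrP => [[_ ->]]. Qed.

Lemma ract1 x : ract x 1 = x.
Proof. by case: corrP => [_ [[-> _] _]]. Qed.

Lemma ractM x g h : ract x (g * h) = ract (ract x g) h.
Proof. by case: corrP => [_ [[_ ->] _]]. Qed.

Lemma s_ract x g : s (ract x g) = actV g^-1 (s x).
Proof. by case: corrP => [_ [_ ->]]. Qed.

Lemma lact_ract h x g : lact h (ract x g) = ract (lact h x) g.
Proof. by case: corrP => [_ _ [-> _ _]]. Qed.

Lemma r_ract x g : r (ract x g) = r x.
Proof. by case: corrP => [_ _ [_ -> _]]. Qed.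

Lemma s_lact h x : s (lact h x) = s x.
Proof. by case: corrP => [_ _ [_ _ ->]]. Qed.

Lemma ract_free x g g' : ract x g = ract x g' -> g = g'.
Proof.
case: corrP => [_ _ _ _ [_ [ract_inj _]]] e.
have := ract_inj ((x, g) : (X * disc G)%type) (x, g').
by rewrite /= e => /(_ erefl) [].
Qed.

Lemma corr_discrete : is_discrete X.
Proof.
apply: discrete_of_open_set1 => x.
case: corrP => [_ _ _ [_ s_cont _ _] [s_loc _]].
have [U [U_open Ux _ U_inj _]] := s_loc x.
have -> : [set x] = U `&` s @^-1` [set s x].
  by apply/seteqP; split=> [y -> //|y [Uy /= sy]]; exact: U_inj.
apply: openI => //; move/continuousP: s_cont; apply; exact: disc_discrete.
Qed.

Lemma pi_ract x g : pi (ract x g) = pi x.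
Proof.
apply/eqmodP/asboolP/seteqP; split=> _ [k _ <-].
  by exists (g * k) => //; rewrite ractM.
by exists (g^-1 * k) => //; rewrite -ractM gmulKVg.
Qed.

Lemma orbit_coord_ex x : exists g, ract (repr (pi x)) g = x.
Proof.
have /asboolP same_orbit : orbit_rel ract (repr (pi x)) x.
  by apply: (introT (eqmodP (orbit_equiv ract) _ _)); rewrite reprK.
have : range (ract x) x by exists 1 => //; rewrite ract1.
by rewrite -same_orbit => -[g _ e]; exists g.
Qed.

Definition orbit_coord x : G := projT1 (cid (orbit_coord_ex x)).

Lemma orbit_coordP x : ract (repr (pi x)) (orbit_coord x) = x.
Proof. exact: projT2 (cid (orbit_coord_ex x)). Qed.

Lemma orbit_coord_uniq x g : ract (repr (pi x)) g = x -> orbit_coord x = g.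
Proof.
by move=> e; apply: (ract_free (x := repr (pi x))); rewrite orbit_coordP e.
Qed.

Lemma lact_coord h x :
  lact h x = ract (lact h (repr (pi x))) (orbit_coord x).
Proof. by rewrite -lact_ract orbit_coordP. Qed.

Lemma pi_lact h x : pi (lact h x) = pi (lact h (repr (pi x))).
Proof. by rewrite {1}lact_coord pi_ract. Qed.

Definition orbit_act h (q : E) : E := pi (lact h (repr q)).
Definition orbit_cocycle h (q : E) : G := orbit_coord (lact h (repr q)).
Definition orbit_r (q : E) : V := r (repr q).
Definition orbit_s (q : E) : V := s (repr q).

Lemma orbit_corr_data :
  corr_data actV orbit_act orbit_cocycle orbit_r orbit_s.
Proof.
split.
- split=> [q|g h q]; rewrite /orbit_act.
    by rewrite (act1 lact_action) reprK.
  by rewrite (actM lact_action) pi_lact.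
- move=> g h q; rewrite /orbit_cocycle /orbit_act; apply: orbit_coord_uniq.
  set y := lact h (repr q).
  have -> : pi (lact (g * h) (repr q)) = pi (lact g (repr (pi y))).
    by rewrite (actM lact_action) pi_lact.
  by rewrite ractM orbit_coordP -lact_ract orbit_coordP (actM lact_action).
- move=> g q; rewrite /orbit_s /orbit_act /orbit_cocycle.
  set y := lact g (repr q).
  have s_y : s y = actV (orbit_coord y)^-1 (s (repr (pi y))).
    by rewrite -s_ract orbit_coordP.
  by rewrite -(s_lact g (repr q)) -/y s_y (actKV actVP).
- move=> g q; rewrite /orbit_r /orbit_act.
  by rewrite -r_lact -[in RHS](orbit_coordP (lact g (repr q))) r_ract.
Qed.

Lemma orbit_corr_iso :
  corr_iso lact ract r s (X_lact orbit_act orbit_cocycle) (@X_ract G E)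
    (X_r orbit_r) (X_s actV orbit_s).
Proof.
exists (fun x => ((pi x, orbit_coord x) : Xspace G E)); split.
- apply/discrete_homeomorphismP; [exact: corr_discrete|exact: Xspace_discrete|].
  exists (fun p : Xspace G E => ract (repr p.1) p.2) => [x|[q g]] /=.
    by rewrite orbit_coordP.
  rewrite pi_ract reprK; congr pair.
  by apply: orbit_coord_uniq; rewrite pi_ract reprK.
- move=> h x; rewrite /X_lact /orbit_act /orbit_cocycle /=; congr pair.
    exact: pi_lact.
  by apply: orbit_coord_uniq; rewrite pi_lact ractM orbit_coordP -lact_coord.
- move=> x g; rewrite /X_ract /= pi_ract; congr pair.
  by apply: orbit_coord_uniq; rewrite pi_ract ractM orbit_coordP.
- by move=> x; rewrite /X_r /orbit_r /= -{2}(orbit_coordP x) r_ract.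
- by move=> x; rewrite /X_s /orbit_s /= -[in RHS](orbit_coordP x) s_ract.
Qed.

End Classification.

Theorem proposition4p3 (G : DGroup) (V : Type) (actV : G -> V -> V)
    (HV : is_left_action actV) :
  (* (1) the construction gives a groupoid correspondence, and
     (4) properness / tightness criteria *)
  (forall (E : Type) (actE : G -> E -> E) (phi : G -> E -> G) (rE sE : E -> V),
     corr_data actV actE phi rE sE ->
     [/\ is_correspondence actV (X_lact actE phi) (@X_ract G E)
           (X_r rE) (X_s actV sE),
         proper_corr (@X_ract G E) (X_r rE) <->
           (forall v : V, finite_set (rE @^-1` [set v])) &
         tight_corr (@X_ract G E) (X_r rE) <-> bijective rE]) /\
  (* (2) every correspondence is isomorphic to one of this form *)
  (forall (X : topologicalType) (lact : G -> X -> X) (ract : X -> G -> X)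
          (r s : X -> disc V),
     is_correspondence actV lact ract r s ->
     exists (E : Type) (actE : G -> E -> E) (phi : G -> E -> G) (rE sE : E -> V),
       corr_data actV actE phi rE sE /\
       corr_iso lact ract r s
         (X_lact actE phi) (@X_ract G E) (X_r rE) (X_s actV sE)) /\
  (* (3) uniqueness of (E, r, s) up to isomorphism and of phi up to the
     action of maps psi : E -> G *)
  (forall (E : Type) (actE : G -> E -> E) (phi : G -> E -> G) (rE sE : E -> V)
          (E' : Type) (actE' : G -> E' -> E') (phi' : G -> E' -> G)
          (rE' sE' : E' -> V),
     corr_data actV actE phi rE sE ->
     corr_data actV actE' phi' rE' sE' ->
     (corr_iso (X_lact actE phi) (@X_ract G E) (X_r rE) (X_s actV sE)
        (X_lact actE' phi') (@X_ract G E') (X_r rE') (X_s actV sE') <->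
      exists (f : E -> E') (psi : E -> G),
        [/\ bijective f,
            forall h e, f (actE h e) = actE' h (f e),
            forall e, rE' (f e) = rE e,
            forall h e, phi' h (f e) =
                        gmul (ginv (psi (actE h e))) (gmul (phi h e) (psi e)) &
            forall e, sE' (f e) = actV (ginv (psi e)) (sE e)])).
Proof.
split; [|split].
- move=> E actE phi rE sE dataP; split.
  + exact: X_is_correspondence.
  + exact: X_proper_corrP.
  + exact: X_tight_corrP.
- move=> X lact ract r s corrP.
  exists (orbit_space ract), (orbit_act lact (ract := ract)),
    (orbit_cocycle corrP), (orbit_r r (ract := ract)),
    (orbit_s s (ract := ract)).
  by split; [exact: orbit_corr_data | exact: orbit_corr_iso].
- by move=> E actE phi rE sE E' actE' phi' rE' sE' _ _; exact: X_corr_isoP.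
Qed.
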